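(* Let $n,t\in\mathbb{N}$, let $B\subset[n]$ be a random set (defined on the same probability space as the shuffle) and let $D\subset[n]$ be a deterministic set. Suppose that for some $c>0$, $$\min_{j\in D}\mathbb{P}^n_{id}(j\in B\mid j\in A^t)\ge c.$$ Then, writing $K=\mathbb{E}^n_{id}|D\cap A^t|$, for every $r\in(0,1)$, $$\mathbb{P}^n_{id}\Big(|B\cap D\cap A^t|\le r\cdot\mathbb{E}^n_{id}\{|B\cap D\cap A^t|\}\Big)\le\frac{K+(1-c^2)K^2}{(1-r)^2c^2K^2}.$$
   Context: The random-to-random insertions shuffle on a deck of $n$ cards numbered $1,\dots,n$: at each step a card is chosen uniformly at random, removed, and reinserted at a uniformly random position. $\mathbb{P}^n_{id}$ (with expectation $\mathbb{E}^n_{id}$) denotes the law of the shuffling process started from the identity ordering, and $A^t$ denotes the (random) set of cards that have not been chosen for removal in the first $t$ shuffles. $[n]=\{1,\dots,n\}$. *)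

From HB Require Import structures.
From mathcomp Require Import all_boot all_order all_algebra.
From mathcomp Require Import reals.
Set Implicit Arguments. Unset Strict Implicit. Unset Printing Implicit Defensive.
Import Order.TTheory GRing.Theory Num.Theory.
Local Open Scope ring_scope.

Definition is_prob (R : realType) (Omega : finType) (P : Omega -> R) : Prop :=
  (forall w, 0 <= P w) /\ \sum_(w : Omega) P w = 1.

Definition Pr (R : realType) (Omega : finType) (P : Omega -> R) (E : pred Omega) : R :=
  \sum_(w : Omega | E w) P w.

Definition Ex (R : realType) (Omega : finType) (P : Omega -> R) (X : Omega -> R) : R :=
  \sum_(w : Omega) P w * X w.

Definition condPr (R : realType) (Omega : finType) (P : Omega -> R) (E F : pred Omega) : R :=
  Pr P (fun w => E w && F w) / Pr P F.

(* Random-to-random shuffle on n cards (cards are 'I_n = {0,..,n-1}), first t steps: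
   Z s w = (card chosen for removal at step s, position where it is reinserted),
   the position ranging over the n slots.  Under P^n_id the choices of the t steps
   are i.i.d. uniform on 'I_n * 'I_n, i.e. every sequence of choices has
   probability (1/n^2)^t. *)
Definition rtr_choices (R : realType) (Omega : finType) (P : Omega -> R)
  (n t : nat) (Z : 'I_t -> Omega -> 'I_n * 'I_n) : Prop :=
  forall f : {ffun 'I_t -> 'I_n * 'I_n},
    Pr P (fun w => [forall s : 'I_t, Z s w == f s]) = ((n * n)%:R ^-1) ^+ t.

(* A^t : cards not chosen for removal in the first t shuffles. *)
Definition untouched (Omega : finType) (n t : nat) (Z : 'I_t -> Omega -> 'I_n * 'I_n)
  (w : Omega) : {set 'I_n} :=
  [set j : 'I_n | [forall s : 'I_t, (Z s w).1 != j]].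

From HB Require Import structures.
From mathcomp Require Import all_boot all_order all_algebra.
From mathcomp Require Import reals lra ring zify.
Set Implicit Arguments. Unset Strict Implicit. Unset Printing Implicit Defensive.
Import Order.TTheory GRing.Theory Num.Theory.
Local Open Scope ring_scope.

(* A second-moment (Chebyshev) argument. The number X of cards of D that are
   untouched and lie in B satisfies E X >= c K by the conditional hypothesis,
   and X <= Y := |D :&: A^t|. The events {i \in A^t} are negatively
   correlated: avoiding two given cards at every step is less likely than
   avoiding each one separately, since (1 - 2/n) <= (1 - 1/n)^2. Hence
   E X^2 <= E Y^2 <= K + K^2, and Chebyshev's inequality for the lower tail
   of X gives the bound. *)

Section FiniteProbability.

Variables (R : realType) (Omega : finType) (P : Omega -> R).
Hypothesis P_ge0 : forall w, 0 <= P w.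

Lemma Pr_ge0 (E : pred Omega) : 0 <= Pr P E.
Proof. exact: sumr_ge0. Qed.

Lemma eq_Ex (X Y : Omega -> R) : X =1 Y -> Ex P X = Ex P Y.
Proof. by move=> XY; apply: eq_bigr => w _; rewrite XY. Qed.

Lemma eq_Pr (E F : pred Omega) : E =1 F -> Pr P E = Pr P F.
Proof. exact: eq_bigl. Qed.

Lemma Ex_indicator (E : pred Omega) : Ex P (fun w => (E w)%:R) = Pr P E.
Proof.
rewrite /Ex /Pr [RHS]big_mkcond; apply: eq_bigr => w _.
by case: (E w); rewrite ?mulr1 ?mulr0.
Qed.

Lemma Ex_sum (I : finType) (D : {set I}) (X : I -> Omega -> R) :
  Ex P (fun w => \sum_(j in D) X j w) = \sum_(j in D) Ex P (X j).
Proof. by rewrite /Ex; under eq_bigr do rewrite mulr_sumr; exact: exchange_big. Qed.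

Lemma ler_Ex (X Y : Omega -> R) : (forall w, X w <= Y w) -> Ex P X <= Ex P Y.
Proof. by move=> XY; apply: ler_sum => w _; apply: ler_wpM2l. Qed.

Lemma markov (E : pred Omega) (X : Omega -> R) (a : R) :
  (forall w, 0 <= X w) -> (forall w, E w -> a <= X w) -> Pr P E * a <= Ex P X.
Proof.
move=> X_ge0 EX; rewrite /Pr /Ex mulr_suml [X in _ <= X](bigID E) /=.
apply: ler_wpDr; first by apply: sumr_ge0 => w _; apply: mulr_ge0.
by apply: ler_sum => w Ew; apply: ler_wpM2l => //; apply: EX.
Qed.

Lemma Ex_sqr_centered (X : Omega -> R) : is_prob P ->
  Ex P (fun w => (X w - Ex P X) ^+ 2) = Ex P (fun w => X w ^+ 2) - Ex P X ^+ 2.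
Proof.
case=> _ P1; set mu := Ex P X.
rewrite /Ex (eq_bigr (fun w =>
    P w * X w ^+ 2 - (2 * mu) * (P w * X w) + mu ^+ 2 * P w)); last by move=> w _; ring.
rewrite !big_split sumrN -!mulr_sumr P1 /=.
by rewrite -/(Ex P X) -/mu; ring.
Qed.

Lemma chebyshev_lower_tail (X : Omega -> R) (r m M : R) : is_prob P ->
  r < 1 -> 0 < m <= Ex P X -> Ex P (fun w => X w ^+ 2) <= M ->
  Pr P (fun w => X w <= r * Ex P X) * ((1 - r) ^+ 2 * m ^+ 2) <= M - m ^+ 2.
Proof.
move=> Pprob r1 /andP[m0 mX] X2M; set mu := Ex P X in mX *.
have mu0 : 0 < mu by lra.
have tail : Pr P (fun w => X w <= r * mu) * ((1 - r) * mu) ^+ 2 <= M - mu ^+ 2.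
  rewrite -(lerD2r (mu ^+ 2)) subrK; apply: le_trans X2M.
  rewrite -(subrK (mu ^+ 2) (Ex P _)) lerD2r -Ex_sqr_centered //.
  apply: markov => [w|w Xw]; first exact: sqr_ge0.
  have -> : (X w - mu) ^+ 2 = (mu - X w) ^+ 2 by rewrite -sqrrN opprB.
  have rmu : r * mu <= mu by rewrite ger_pMl // ltW.
  by rewrite ler_sqr ?nnegrE ?mulr_ge0 ?subr_ge0 ?(ltW r1) ?(ltW mu0) //; lra.
have p0 := Pr_ge0 (fun w => X w <= r * mu).
have mmu : m ^+ 2 <= mu ^+ 2 by rewrite ler_sqr ?nnegrE; lra.
have := ler_wpM2l p0 (ler_wpM2l (sqr_ge0 (1 - r)) mmu).
by move: tail; rewrite exprMn; lra.
Qed.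

End FiniteProbability.

Section RandomSubsets.

Variables (R : realType) (Omega I : finType) (P : Omega -> R).
Hypothesis P_ge0 : forall w, 0 <= P w.
Variables (D : {set I}) (F : Omega -> {set I}).

Lemma natr_card_setI (w : Omega) :
  #|D :&: F w|%:R = \sum_(j in D) (j \in F w)%:R :> R.
Proof.
rewrite -sum1_card natr_sum big_mkcond [RHS]big_mkcond; apply: eq_bigr => j _.
by rewrite inE; case: (j \in D); case: (j \in F w).
Qed.

Lemma Ex_card_setI :
  Ex P (fun w => #|D :&: F w|%:R) = \sum_(j in D) Pr P (fun w => j \in F w).
Proof.
rewrite (eq_Ex P natr_card_setI) Ex_sum.
by apply: eq_bigr => j _; rewrite Ex_indicator.
Qed.

Lemma Ex_sqr_card_setI :
  Ex P (fun w => #|D :&: F w|%:R ^+ 2) =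
  \sum_(i in D) \sum_(j in D) Pr P (fun w => (i \in F w) && (j \in F w)).
Proof.
rewrite (eq_Ex P (Y := fun w => \sum_(i in D) \sum_(j in D)
                              ((i \in F w) && (j \in F w))%:R)); last first.
  move=> w; rewrite natr_card_setI expr2 mulr_suml; apply: eq_bigr => i _.
  by rewrite mulr_sumr; apply: eq_bigr => j _; rewrite -natrM mulnb.
by rewrite Ex_sum; apply: eq_bigr => i _; rewrite Ex_sum;
  apply: eq_bigr => j _; rewrite Ex_indicator.
Qed.

Hypothesis F_negcor : forall i j, i \in D -> j \in D -> i != j ->
  Pr P (fun w => (i \in F w) && (j \in F w)) <=
  Pr P (fun w => i \in F w) * Pr P (fun w => j \in F w).

Let K := Ex P (fun w => #|D :&: F w|%:R).

Lemma Ex_sqr_card_setI_negcor :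
  Ex P (fun w => #|D :&: F w|%:R ^+ 2) <= K + K ^+ 2.
Proof.
pose p j := Pr P (fun w => j \in F w).
have KE : K = \sum_(j in D) p j by rewrite /K Ex_card_setI.
have -> : K + K ^+ 2 = \sum_(i in D) (p i + p i * K).
  by rewrite big_split -mulr_suml -KE expr2.
rewrite Ex_sqr_card_setI; apply: ler_sum => i iD.
rewrite KE mulr_sumr !(bigD1 i iD) /= addrA.
have -> : Pr P (fun w => (i \in F w) && (i \in F w)) = p i.
  by apply: eq_Pr => w; rewrite andbb.
apply: lerD.
  by rewrite -[X in X <= _]addr0 lerD2l mulr_ge0 ?Pr_ge0.
by apply: ler_sum => j /andP[jD ji]; apply: F_negcor; rewrite // eq_sym.
Qed.

End RandomSubsets.

Section RandomToRandom.

Variables (R : realType) (Omega : finType) (P : Omega -> R) (n t : nat).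
Variable Z : 'I_t -> Omega -> 'I_n * 'I_n.
Hypothesis HZ : rtr_choices P Z.

Lemma Pr_choices (Q : pred {ffun 'I_t -> 'I_n * 'I_n}) :
  Pr P (fun w => Q [ffun s => Z s w]) = #|Q|%:R * ((n * n)%:R ^-1) ^+ t.
Proof.
rewrite /Pr (partition_big (fun w => [ffun s => Z s w]) Q) //=.
rewrite (eq_bigr (fun _ => ((n * n)%:R ^-1) ^+ t)) ?sumr_const ?mulr_natl //.
move=> f Qf; rewrite -(HZ f); apply: eq_Pr => w.
apply/andP/forallP => [[_ /eqP <-] s|Zf]; first by rewrite ffunE.
have -> : [ffun s => Z s w] = f by apply/ffunP => s; rewrite ffunE; apply/eqP.
by rewrite Qf.
Qed.

Lemma card_ffun_avoid (S : {set 'I_n}) :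
  #|(fun f : {ffun 'I_t -> 'I_n * 'I_n} => [forall s, (f s).1 \notin S])| =
  ((#|~: S| * n) ^ t)%N.
Proof.
rewrite (@eq_card _ _ (ffun_on (mem (setX (~: S) [set: 'I_n])))).
  by rewrite card_ffun_on cardsX cardsT !card_ord.
move=> f; rewrite inE; apply/forallP/ffun_onP => [Sf s|Sf s].
  by rewrite !inE andbT; apply: Sf.
by have := Sf s; rewrite !inE andbT.
Qed.

Lemma Pr_subset_untouched (S : {set 'I_n}) :
  Pr P (fun w => S \subset untouched Z w) = ((n - #|S|)%:R / n%:R) ^+ t.
Proof.
pose avoids (f : {ffun 'I_t -> 'I_n * 'I_n}) := [forall s, (f s).1 \notin S].
have -> : Pr P (fun w => S \subset untouched Z w) =
          Pr P (fun w => avoids [ffun s => Z s w]).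
  apply: eq_Pr => w; apply/subsetP/forallP => [Sw s|Sw x xS]; rewrite ?ffunE.
    by apply/negP => /Sw; rewrite inE => /forallP/(_ s); rewrite eqxx.
  rewrite inE; apply/forallP => s.
  by move: (Sw s); rewrite ffunE; apply: contraNneq => ->.
rewrite (Pr_choices avoids) card_ffun_avoid cardsCs setCK card_ord natrX -exprMn !natrM.
rewrite natrB; last by have := max_card (mem S); rewrite card_ord.
have [->|n0] := eqVneq (n%:R : R) 0; first by rewrite !(mulr0, invr0).
by rewrite invfM mulrA mulfK.
Qed.

Lemma untouched_negcor (i j : 'I_n) : i != j ->
  Pr P (fun w => (i \in untouched Z w) && (j \in untouched Z w)) <=
  Pr P (fun w => i \in untouched Z w) * Pr P (fun w => j \in untouched Z w).
Proof.
move=> ij; have n2 : (2 <= n)%N.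
  by move: ij (ltn_ord i) (ltn_ord j); rewrite -val_eqE /=; lia.
have Pr1 k : Pr P (fun w => k \in untouched Z w) = ((n - 1)%:R / n%:R) ^+ t.
  by rewrite -(cards1 k) -Pr_subset_untouched; apply: eq_Pr => w; rewrite sub1set.
have Pr2 : Pr P (fun w => (i \in untouched Z w) && (j \in untouched Z w)) =
    ((n - 2)%:R / n%:R) ^+ t.
  have -> : 2%N = #|[set i; j]| by rewrite cards2 ij.
  rewrite -Pr_subset_untouched.
  by apply: eq_Pr => w; rewrite subUset !sub1set.
rewrite Pr1 Pr1 Pr2 -exprMn natrB ?natrB //; last by lia.
set m : R := n%:R; have m2 : 2 <= m by rewrite (ler_nat R 2).
apply: lerXn2r; rewrite ?nnegrE ?mulr_ge0 ?divr_ge0 ?subr_ge0 ?invr_ge0 //; try lra.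
have -> : (m - 2) / m = (m - 1) / m * ((m - 1) / m) - (m ^+ 2)^-1.
  by field; apply/eqP; lra.
by rewrite lerBlDr lerDl invr_ge0 exprn_ge0 //; lra.
Qed.

End RandomToRandom.

Theorem lemma2 (R : realType) (Omega : finType) (P : Omega -> R) (n t : nat)
  (Z : 'I_t -> Omega -> 'I_n * 'I_n) (B : Omega -> {set 'I_n}) (D : {set 'I_n}) (c : R) :
  is_prob P ->
  rtr_choices P Z ->
  D != set0 ->
  (forall j, j \in D -> 0 < Pr P (fun w => j \in untouched Z w)) ->
  0 < c ->
  (forall j, j \in D ->
     c <= condPr P (fun w => j \in B w) (fun w => j \in untouched Z w)) ->
  let K := Ex P (fun w => #|D :&: untouched Z w|%:R) in
  forall r : R, 0 < r < 1 ->
    Pr P (fun w => #|B w :&: D :&: untouched Z w|%:R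
                   <= r * Ex P (fun w' => #|B w' :&: D :&: untouched Z w'|%:R))
    <= (K + (1 - c ^+ 2) * K ^+ 2) / ((1 - r) ^+ 2 * c ^+ 2 * K ^+ 2).
Proof.
move=> Pprob HZ /set0Pn[j0 j0D] Apos c0 Bcond K r /andP[_ r1].
have P_ge0 := Pprob.1.
pose X w := #|D :&: (B w :&: untouched Z w)|%:R : R.
have XE w : #|B w :&: D :&: untouched Z w|%:R = X w.
  by rewrite /X setIA [D :&: B w]setIC.
rewrite (eq_Ex P XE) (eq_Pr P (F := fun w => X w <= r * Ex P X));
  last by move=> w; rewrite XE.
have KE := Ex_card_setI P D (untouched Z).
have K0 : 0 < K.
  rewrite /K KE (bigD1 j0 j0D) /=; apply: (lt_le_trans (Apos _ j0D)).
  by rewrite lerDl sumr_ge0 // => j _; apply: Pr_ge0.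
have cKX : c * K <= Ex P X.
  rewrite /X Ex_card_setI /K KE mulr_sumr; apply: ler_sum => j jD.
  under [X in _ <= X]eq_Pr do rewrite in_setI.
  by have := Bcond j jD; rewrite /condPr ler_pdivlMr ?Apos.
have X2 : Ex P (fun w => X w ^+ 2) <= K + K ^+ 2.
  have negcor i j (_ : i \in D) (_ : j \in D) := untouched_negcor (i := i) (j := j) HZ.
  apply: le_trans _ (Ex_sqr_card_setI_negcor P_ge0 negcor).
  apply: ler_Ex => // w; rewrite ler_sqr ?nnegrE // ler_nat.
  by apply/subset_leq_card/setIS/subsetIr.
have cK0 : 0 < c * K <= Ex P X by rewrite mulr_gt0.
have := chebyshev_lower_tail P_ge0 Pprob r1 cK0 X2.
rewrite ler_pdivlMr ?mulr_gt0 ?exprn_gt0 ?subr_gt0 // exprMn !mulrA.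
lra.
Qed.
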